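(* Let $(A,m,\Delta)$ be an infinitesimal multiplier bialgebra (see context), and write $[x,y]=xy-yx$ for $x,y\in A$. For $a\in A$ define linear maps $\delta_a,\zeta^a:A\to A\otimes A$ by $$\delta_a(x)=\Delta(x)(a\otimes 1)-\tau\big(\Delta(x)(a\otimes 1)\big),\qquad \zeta^a(x)=(1\otimes a)\Delta(x)-\tau\big((1\otimes a)\Delta(x)\big),$$ where $\tau$ is the flip $u\otimes v\mapsto v\otimes u$. Then for all $a,x,y\in A$, $$\delta_a[x,y]=x\cdot\delta_a(y)-y\cdot\delta_a(x)+\underline{\mathbb B}(a)(x\otimes y)-\underline{\mathbb B}(a)(y\otimes x),$$ $$\zeta^a[x,y]=x\cdot\zeta^a(y)-y\cdot\zeta^a(x)+\overline{\mathbb B}(a)(x\otimes y)-\overline{\mathbb B}(a)(y\otimes x),$$ where $x\cdot(u\otimes v)=[x,u]\otimes v+u\otimes[x,v]$ for $u,v\in A$ (extended linearly), and $\underline{\mathbb B}(a),\overline{\mathbb B}(a)$ are the linear endomorphisms of $A\otimes A$ given by $$\underline{\mathbb B}(a)(x\otimes y)=(x\otimes 1)\,\tau\big(\Delta(y)(a\otimes 1)\big)-\tau\big(\Delta(y)(ax\otimes 1)\big)+(1\otimes y)\big(\Delta(x)(a\otimes 1)\big)-\Delta(x)(ay\otimes 1),$$ $$\overline{\mathbb B}(a)(x\otimes y)=\tau\big((1\otimes xa)\Delta(y)\big)-\tau\big(((1\otimes a)\Delta(y))(x\otimes 1)\big)+(1\otimes ya)\Delta(x)-\big((1\otimes a)\Delta(x)\big)(y\otimes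 1).$$
   Context: All algebras are associative $\mathbb C$-algebras, not necessarily unital, whose product is non-degenerate (if $ab=0$ for all $b$ then $a=0$, and if $ba=0$ for all $b$ then $a=0$). For such an algebra $B$, a left multiplier is a linear $\lambda:B\to B$ with $\lambda(bc)=\lambda(b)c$, a right multiplier is a linear $\rho:B\to B$ with $\rho(bc)=b\rho(c)$, and the multiplier algebra $M(B)$ consists of pairs $(\lambda,\rho)$ of a left and a right multiplier with $b\lambda(c)=\rho(b)c$ for all $b,c$; its product is $(\lambda,\rho)(\lambda',\rho')=(\lambda\circ\lambda',\rho'\circ\rho)$, it has identity $(\mathrm{id},\mathrm{id})$, and $B$ embeds in $M(B)$ via $b\mapsto(\lambda_b,\rho_b)$, $\lambda_b(c)=bc$, $\rho_b(c)=cb$. A coproduct on $A$ is a linear map $\Delta:A\to M(A\otimes A)$ such that (a) $\Delta(b)(a\otimes 1)\in A\otimes A$ and $(1\otimes b)\Delta(a)\in A\otimes A$ for all $a,b\in A$, and (b) with $T_3(a\otimes b)=\Delta(b)(a\otimes 1)$ and $T_4(a\otimes b)=(1\otimes b)\Delta(a)$, one has $(\iota\otimes T_4)\circ(T_3\otimes\iota)=(T_3\otimes\iota)\circ(\iota\otimes T_4)$ on $A\otimes A\otimes A$ ($\iota$ the identity). An infinitesimal multiplier bialgebra is a triple $(A,m,\Delta)$ with $(A,m)$ an associative algebra with non-degenerate product, $\Delta$ a coproduct on $A$, and $\Delta(ab)=\Delta(a)(1\otimes b)+(a\otimes 1)\Delta(b)$ in $M(A\otimes A)$ for all $a,b\in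 A$. Expressions such as $(x\otimes 1)\,\tau(w)$ or $w(y\otimes 1)$ with $w\in A\otimes A$ are products in the algebra $A\otimes A$. The pair $\mathbb B(a)=(\underline{\mathbb B}(a),\overline{\mathbb B}(a))$ is called the bibalanceator of $A$. *)

From mathcomp Require Import all_boot all_algebra.
From mathcomp Require Import complex Rstruct.
From Stdlib Require Import Reals ClassicalEpsilon.

Set Implicit Arguments.
Unset Strict Implicit.
Unset Printing Implicit Defensive.
Import GRing.Theory.
Local Open Scope ring_scope.

Definition CC : fieldType := complex Rdefinitions.R.

Section Generic.
Variable K : fieldType.

Definition lin (U W : lmodType K) (f : U -> W) : Prop :=
  forall (k : K) (u v : U), f (k *: u + v) = k *: f u + f v.

Definition bilin (U V W : lmodType K) (f : U -> V -> W) : Prop :=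
  (forall u, lin (f u)) /\ (forall v, lin (fun u => f u v)).

Definition trilin (U V X W : lmodType K) (f : U -> V -> X -> W) : Prop :=
  (forall u v, lin (f u v)) /\ (forall u x, lin (fun v => f u v x))
  /\ (forall v x, lin (fun u => f u v x)).

Definition is_nd_algebra (A : lmodType K) (mul : A -> A -> A) : Prop :=
  bilin mul
  /\ (forall a b c, mul (mul a b) c = mul a (mul b c))
  /\ (forall a, (forall b, mul a b = 0) -> a = 0)
  /\ (forall a, (forall b, mul b a = 0) -> a = 0).

Definition is_tensor (U V T : lmodType K) (t : U -> V -> T) : Prop :=
  bilin t /\
  forall (W : lmodType K) (f : U -> V -> W), bilin f ->
    exists g : T -> W, [/\ lin g, (forall u v, g (t u v) = f u v) &
      (forall g' : T -> W, lin g' -> (forall u v, g' (t u v) = f u v) ->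
         forall x, g' x = g x)].

Definition is_tensor3 (U V X T : lmodType K) (t : U -> V -> X -> T) : Prop :=
  trilin t /\
  forall (W : lmodType K) (f : U -> V -> X -> W), trilin f ->
    exists g : T -> W, [/\ lin g, (forall u v x, g (t u v x) = f u v x) &
      (forall g' : T -> W, lin g' -> (forall u v x, g' (t u v x) = f u v x) ->
         forall y, g' y = g y)].

(* The linear map T -> W induced by a bilinear f (when t is a tensor
   product and f is bilinear; chosen by classical choice). *)
Definition tlift (U V T W : lmodType K) (t : U -> V -> T) (f : U -> V -> W)
  : T -> W :=
  epsilon (inhabits (fun _ : T => 0 : W))
    (fun g => lin g /\ forall u v, g (t u v) = f u v).

Definition tlift3 (U V X T W : lmodType K) (t : U -> V -> X -> T)
  (f : U -> V -> X -> W) : T -> W :=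
  epsilon (inhabits (fun _ : T => 0 : W))
    (fun g => lin g /\ forall u v x, g (t u v x) = f u v x).

Definition tmap (U V T U' V' T' : lmodType K) (t : U -> V -> T)
  (t' : U' -> V' -> T') (f : U -> U') (g : V -> V') : T -> T' :=
  tlift t (fun u v => t' (f u) (g v)).

End Generic.

Section TensorSquare.
Variables (K : fieldType) (A : lmodType K) (mul : A -> A -> A).
Variables (T : lmodType K) (tens : A -> A -> T).

Definition tflip : T -> T := tlift tens (fun u v => tens v u).

(* the product of the algebra A (x) A : (a (x) b)(c (x) d) = ac (x) bd *)
Definition tmul (w z : T) : T :=
  tlift tens (fun c d => tmap tens tens (fun a => mul a c) (fun b => mul b d) w) z.

Definition mult := ((T -> T) * (T -> T))%type.

Definition is_multiplier (m : mult) : Prop :=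
  [/\ lin m.1, lin m.2,
      (forall b c, m.1 (tmul b c) = tmul (m.1 b) c),
      (forall b c, m.2 (tmul b c) = tmul b (m.2 c)) &
      (forall b c, tmul b (m.1 c) = tmul (m.2 b) c)].

Definition meq (m n : mult) : Prop :=
  (forall w, m.1 w = n.1 w) /\ (forall w, m.2 w = n.2 w).
Definition madd (m n : mult) : mult := (fun w => m.1 w + n.1 w, fun w => m.2 w + n.2 w).
Definition mprod (m n : mult) : mult := (fun w => m.1 (n.1 w), fun w => n.2 (m.2 w)).

Definition memb (w : T) : mult := (fun z => tmul w z, fun z => tmul z w).

(* the multipliers a (x) 1 and 1 (x) b *)
Definition m_x1 (a : A) : mult :=
  (tmap tens tens (mul a) (fun c => c), tmap tens tens (fun c => mul c a) (fun c => c)).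
Definition m_1x (b : A) : mult :=
  (tmap tens tens (fun c => c) (mul b), tmap tens tens (fun c => c) (fun c => mul c b)).

(* the element of A (x) A represented by a multiplier lying in A (x) A *)
Definition elt (m : mult) : T := epsilon (inhabits 0) (fun w => meq m (memb w)).

Variable Delta : A -> mult.

(* Delta(x)(a (x) 1)  and  (1 (x) a)Delta(x), as elements of A (x) A *)
Definition D_r (x a : A) : T := elt (mprod (Delta x) (m_x1 a)).
Definition D_l (x a : A) : T := elt (mprod (m_1x a) (Delta x)).

Definition T3 : T -> T := tlift tens (fun a b => D_r b a).
Definition T4 : T -> T := tlift tens (fun a b => D_l a b).

Definition is_coproduct (T' : lmodType K) (tens3 : A -> A -> A -> T') : Prop :=
  (forall x, is_multiplier (Delta x))
  /\ (forall (k : K) x y, meq (Delta (k *: x + y))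
        ((fun w => k *: (Delta x).1 w + (Delta y).1 w),
         (fun w => k *: (Delta x).2 w + (Delta y).2 w)))
  /\ (forall a b, exists w, meq (mprod (Delta b) (m_x1 a)) (memb w))
  /\ (forall a b, exists w, meq (mprod (m_1x b) (Delta a)) (memb w))
  (* (b) : (iota (x) T4) o (T3 (x) iota) = (T3 (x) iota) o (iota (x) T4)
     on A (x) A (x) A *)
  /\ (let T3i := tlift3 tens3 (fun a b c =>
                   tlift tens (fun a' b' => tens3 a' b' c) (T3 (tens a b))) in
      let iT4 := tlift3 tens3 (fun a b c =>
                   tlift tens (fun b' c' => tens3 a b' c') (T4 (tens b c))) in
      forall z, iT4 (T3i z) = T3i (iT4 z)).

Definition is_inf_mult_bialgebra (T' : lmodType K) (tens3 : A -> A -> A -> T') : Prop :=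
  is_nd_algebra mul /\ is_coproduct tens3 /\
  forall a b, meq (Delta (mul a b))
                  (madd (mprod (Delta a) (m_1x b)) (mprod (m_x1 a) (Delta b))).

Definition comm (x y : A) : A := mul x y - mul y x.

Definition delta_ (a x : A) : T := D_r x a - tflip (D_r x a).
Definition zeta_ (a x : A) : T := D_l x a - tflip (D_l x a).

Definition dot (x : A) (w : T) : T :=
  tlift tens (fun u v => tens (comm x u) v + tens u (comm x v)) w.

Definition bib_under (a : A) : T -> T :=
  tlift tens (fun x y =>
    (m_x1 x).1 (tflip (D_r y a)) - tflip (D_r y (mul a x))
    + (m_1x y).1 (D_r x a) - D_r x (mul a y)).

Definition bib_over (a : A) : T -> T :=
  tlift tens (fun x y =>
    tflip (D_l y (mul x a)) - tflip ((m_x1 x).2 (D_l y a))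
    + D_l x (mul y a) - (m_x1 y).2 (D_l x a)).

End TensorSquare.

(* Fix [a] and let [D x := Delta(x)(a (x) 1)] (resp. [(1 (x) a)Delta(x)]).
   The Leibniz rule for [Delta] makes [D] a derivation into the outer bimodule
   [A (x) A]: [D (x y) = D(x)(1 (x) y) + (x (x) 1)D(y)]. For any linear such [D],
   expanding [(1 - tau) D [x, y]] is a formal computation in the free abelian
   group on the terms [(x (x) 1)D(y)], [D(y)(x (x) 1)], ... and their flips,
   and produces the formula with a correction term built from [D]; it is the
   bibalanceator because [Delta(y)(a x (x) 1) = Delta(y)(a (x) 1) (x (x) 1)].
   The one non-formal ingredient is that an element of [A (x) A] is determined
   by its products with [A (x) A], which is what makes [D] well defined, linear
   and a derivation. Its proof separates tensors by linear functionals, which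
   exist by Zorn's lemma. *)

From mathcomp Require Import all_boot all_algebra.
From mathcomp Require Import ring.
From mathcomp Require Import boolp classical_sets.
From Stdlib Require Import ClassicalEpsilon.

Set Implicit Arguments.
Unset Strict Implicit.
Unset Printing Implicit Defensive.
Import GRing.Theory.
Local Open Scope ring_scope.
Local Open Scope classical_set_scope.

Section LinearMaps.
Variable K : fieldType.
Implicit Types U V W : lmodType K.

Lemma lin0 U W (f : U -> W) : lin f -> f 0 = 0.
Proof.
move=> Hf; apply: (addrI (f 0)).
by rewrite addr0 -{1}(scale1r (f 0)) -Hf scale1r addr0.
Qed.

Lemma linD U W (f : U -> W) : lin f -> forall u v, f (u + v) = f u + f v.
Proof. by move=> Hf u v; rewrite -[u in LHS]scale1r Hf scale1r. Qed.

Lemma linZ U W (f : U -> W) : lin f -> forall k u, f (k *: u) = k *: f u.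
Proof. by move=> Hf k u; rewrite -[_ *: u]addr0 Hf (lin0 Hf) addr0. Qed.

Lemma linN U W (f : U -> W) : lin f -> forall u, f (- u) = - f u.
Proof. by move=> Hf u; rewrite -scaleN1r (linZ Hf) scaleN1r. Qed.

Lemma linB U W (f : U -> W) : lin f -> forall u v, f (u - v) = f u - f v.
Proof. by move=> Hf u v; rewrite addrC -scaleN1r Hf scaleN1r addrC. Qed.

Lemma lin_sum U W (f : U -> W) (I : Type) (s : seq I) (F : I -> U) :
  lin f -> f (\sum_(i <- s) F i) = \sum_(i <- s) f (F i).
Proof.
move=> Hf; elim: s => [|i s IHs]; first by rewrite !big_nil (lin0 Hf).
by rewrite !big_cons (linD Hf) IHs.
Qed.

Lemma lin_id U : lin (fun u : U => u).
Proof. by []. Qed.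

Lemma lin_comp U V W (f : V -> W) (g : U -> V) :
  lin f -> lin g -> lin (fun u => f (g u)).
Proof. by move=> Hf Hg k u v; rewrite Hg Hf. Qed.

Lemma lin_compl U V X W (h : V -> X -> W) (g : U -> V) (x : X) :
  lin (h^~ x) -> lin g -> lin (fun u => h (g u) x).
Proof. by move=> Hh Hg k u v; rewrite Hg Hh. Qed.

Lemma lin_add U W (f g : U -> W) : lin f -> lin g -> lin (fun u => f u + g u).
Proof. by move=> Hf Hg k u v; rewrite Hf Hg scalerDr addrACA. Qed.

Lemma lin_sub U W (f g : U -> W) : lin f -> lin g -> lin (fun u => f u - g u).
Proof. by move=> Hf Hg k u v; rewrite Hf Hg scalerBr opprD addrACA. Qed.

Lemma lin_scale U W (c : K) (f : U -> W) : lin f -> lin (fun u => c *: f u).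
Proof. by move=> Hf k u v; rewrite Hf scalerDr !scalerA mulrC. Qed.

End LinearMaps.

Create HintDb lin.
#[export] Hint Resolve lin_id : lin.

Ltac linearity := repeat first
  [ assumption | solve [eauto with lin] | apply: lin_sub | apply: lin_add
  | apply: lin_scale
  | lazymatch goal with |- lin (fun _ => _) => first [apply: lin_compl | apply: lin_comp] end ].


Section Separation.
Variables (K : fieldType) (V : lmodType K).

Definition subspace (S : set V) := S 0 /\ forall k x y, S x -> S y -> S (k *: x + y).

Variables (S : set V) (w : V).
Hypotheses (subS : subspace S) (Sw : ~ S w).

(* A partial functional vanishing on [S] with value [1] at [w] is encoded by its
   graph, a subspace of [V * K] avoiding [(0, 1)]; the empty set is admitted so
   that the union of the empty chain is admissible as well. *)
Definition graph_closed (G : set (V * K)) :=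
  forall k p q, G p -> G q -> G (k *: p.1 + q.1, k * p.2 + q.2).

Definition extends_base (G : set (V * K)) := forall s k, S s -> G (s + k *: w, k).

Definition admissible (G : set (V * K)) :=
  [/\ graph_closed G, ~ G (0, 1) & G !=set0 -> extends_base G].

Let base : set (V * K) := [set p | exists s k, S s /\ p = (s + k *: w, k)].

Lemma admissible_base : admissible base.
Proof.
split=> [k _ _ [s [c [Ss ->]]] [s' [c' [Ss' ->]]]| [s [c [Ss []]]] |_ s c Ss].
- exists (k *: s + s'), (k * c + c'); split; first by case: subS => _; apply.
  by rewrite /= scalerDr scalerDl scalerA addrACA.
- move=> Es c1; rewrite -c1 scale1r in Es; apply: Sw.
  have -> : w = -1 *: s + 0 by apply/eqP; rewrite scaleN1r addr0 -addr_eq0 addrC -Es.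
  by case: subS => S0; apply.
- by exists s, c.
Qed.

Lemma admissible_bigcup (F : set (set (V * K))) :
  F `<=` admissible -> total_on F subset -> admissible (\bigcup_(G in F) G).
Proof.
move=> FA Ftot; split.
- move=> k p q [G FG Gp] [G' FG' G'q].
  have [GG'|G'G] := Ftot _ _ FG FG'.
  + by exists G' => //; case: (FA _ FG') => + _ _; apply; [apply: GG'|].
  + by exists G => //; case: (FA _ FG) => + _ _; apply; [|apply: G'G].
- by case=> G /FA [_ nG01 _].
- move=> [p [G FG Gp]] s k Ss; exists G => //.
  by case: (FA _ FG) => _ _; apply=> //; exists p.
Qed.

Section MaximalGraph.
Variable G : set (V * K).
Hypotheses (admG : admissible G) (maxG : forall B, G `<` B -> ~ admissible B).

Lemma maximal_graph_extends : extends_base G.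
Proof.
case: admG => _ _; apply; apply/set0P/negP => /eqP G0.
have : G `<` base.
  rewrite G0; split=> [//|/(_ (0, 0))]; apply.
  by exists 0, 0; rewrite scale0r addr0; split=> //; case: subS.
by move/maxG; apply; apply: admissible_base.
Qed.

Lemma maximal_graph_closed : graph_closed G.
Proof. by case: admG. Qed.

Lemma maximal_graph00 : G (0, 0).
Proof.
have := maximal_graph_extends (s := 0) 0; rewrite scale0r addr0; apply.
by case: subS.
Qed.

Lemma maximal_graph_fun x c c' : G (x, c) -> G (x, c') -> c = c'.
Proof.
move=> Gc Gc'; apply/eqP; rewrite -subr_eq0; apply/negP => /negP d0.
case: admG => _ nG01 _; apply: nG01.
have Gd : G (0, c - c').
  by have := maximal_graph_closed (-1) Gc' Gc; rewrite /= scaleN1r addNr mulN1r addrC.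
have := maximal_graph_closed (c - c')^-1 Gd maximal_graph00.
by rewrite /= scaler0 addr0 mulVf // addr0.
Qed.

Lemma maximal_graph_total u : exists c, G (u, c).
Proof.
apply: contrapT => noc.
pose G' := [set p | exists x a t, G (x, a) /\ p = (x + t *: u, a)].
have GG' : G `<` G'.
  split=> [[x a] Gxa|/(_ (u, 0)) Gu0]; first by exists x, a, 0; rewrite scale0r addr0.
  apply: noc; exists 0; apply: Gu0.
  by exists 0, 0, 1; rewrite add0r scale1r; split=> //; apply: maximal_graph00.
apply: (maxG GG'); split.
- move=> k _ _ [x [a [t [Gxa ->]]]] [x' [a' [t' [Gxa' ->]]]].
  exists (k *: x + x'), (k * a + a'), (k * t + t'); split.
    exact: (maximal_graph_closed k Gxa Gxa').
  by rewrite /= scalerDr scalerDl scalerA addrACA.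
- move=> [x [a [t [Gxa []]]]] x0 a1; rewrite -a1 in Gxa.
  have [t0|t0] := eqVneq t 0.
    by case: admG => _ + _; apply; rewrite x0 t0 scale0r addr0.
  have tu : t *: u = - x by apply/eqP; rewrite -addr_eq0 addrC -x0.
  apply: noc; exists (- t^-1).
  have := maximal_graph_closed (- t^-1) Gxa maximal_graph00.
  by rewrite /= mulr1 !addr0 scaleNr -scalerN -tu scalerA mulVf ?scale1r.
- move=> _ s k Ss; exists (s + k *: w), k, 0.
  by rewrite scale0r addr0; split=> //; apply: maximal_graph_extends.
Qed.

End MaximalGraph.

Theorem subspace_separation :
  exists phi : V -> K^o, [/\ lin phi, forall s, S s -> phi s = 0 & phi w = 1].
Proof.
have [G [admG maxG]] := Zorn_bigcup admissible_bigcup.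
pose phi u : K^o := xget 0 (fun c => G (u, c)).
have total u : G (u, phi u) by exact: xgetPex (maximal_graph_total admG maxG u).
have phiE u c : G (u, c) -> phi u = c by apply: (maximal_graph_fun admG maxG).
have ext := maximal_graph_extends admG maxG.
exists phi; split.
- by move=> k x y; apply: phiE; exact: (maximal_graph_closed admG k (total x) (total y)).
- by move=> s Ss; apply: phiE; have := ext s 0 Ss; rewrite scale0r addr0.
- by apply: phiE; have := ext 0 1; rewrite add0r scale1r; apply; case: subS.
Qed.

End Separation.

Lemma subspace0 (K : fieldType) (V : lmodType K) : subspace [set 0 : V].
Proof. by split=> // k _ _ -> ->; rewrite scaler0 addr0. Qed.

Lemma functional_one (K : fieldType) (V : lmodType K) (v : V) :
  v != 0 -> exists phi : V -> K^o, lin phi /\ phi v = 1.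
Proof.
move=> /(elimN eqP) nz_v.
by have [phi [Hphi _ phiv]] := subspace_separation (subspace0 V) nz_v; exists phi.
Qed.

Section TensorProduct.
Variables (K : fieldType) (U V T : lmodType K) (tens : U -> V -> T).
Hypothesis HT : is_tensor tens.

Lemma tens_linl v : lin (tens^~ v). Proof. by case: HT => [[]]. Qed.
Lemma tens_linr u : lin (tens u). Proof. by case: HT => [[]]. Qed.

Lemma tlift_spec (W : lmodType K) (f : U -> V -> W) : bilin f ->
  lin (tlift tens f) /\ forall u v, tlift tens f (tens u v) = f u v.
Proof.
move=> Hf; rewrite /tlift; eapply epsilon_spec.
by case: HT => _ /(_ W f Hf) [g [Hg Eg _]]; exists g.
Qed.

Lemma tlift_lin (W : lmodType K) (f : U -> V -> W) : bilin f -> lin (tlift tens f).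
Proof. by case/tlift_spec. Qed.

Lemma tliftE (W : lmodType K) (f : U -> V -> W) : bilin f ->
  forall u v, tlift tens f (tens u v) = f u v.
Proof. by case/tlift_spec. Qed.

Lemma tensor_ext (W : lmodType K) (g1 g2 : T -> W) : lin g1 -> lin g2 ->
  (forall u v, g1 (tens u v) = g2 (tens u v)) -> forall w, g1 w = g2 w.
Proof.
move=> Hg1 Hg2 E w.
have Hf : bilin (fun u v => g2 (tens u v)).
  by split=> [u|v]; apply: lin_comp => //; [apply: tens_linr|apply: tens_linl].
case: HT => _ /(_ W _ Hf) [g [_ _ gU]].
by rewrite (gU g1 Hg1 E) (gU g2 Hg2 (fun _ _ => erefl)).
Qed.

Lemma tensor_ext2 (W : lmodType K) (F G : T -> T -> W) :
  (forall w, lin (F w)) -> (forall z, lin (F^~ z)) ->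
  (forall w, lin (G w)) -> (forall z, lin (G^~ z)) ->
  (forall a b c d, F (tens a b) (tens c d) = G (tens a b) (tens c d)) ->
  forall w z, F w z = G w z.
Proof.
move=> F1 F2 G1 G2 E w z; move: w; apply: (tensor_ext (F2 z) (G2 z)) => a b.
by move: z; apply: (tensor_ext (F1 _) (G1 _)) => c d; apply: E.
Qed.

Definition pure_span : set T :=
  [set w | exists s : seq (U * V), w = \sum_(p <- s) tens p.1 p.2].

Lemma pure_span_subspace : subspace pure_span.
Proof.
split=> [|k _ _ [s ->] [s' ->]]; first by exists [::]; rewrite big_nil.
exists (map (fun p => (k *: p.1, p.2)) s ++ s'); rewrite big_cat big_map scaler_sumr.
by congr (_ + _); apply: eq_bigr => p _; rewrite (linZ (tens_linl _)).
Qed.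

Lemma pure_span_tens u v : pure_span (tens u v).
Proof. by exists [:: (u, v)]; rewrite big_seq1. Qed.

(* A functional separating [w] from the span would agree with [0] on pure
   tensors, contradicting uniqueness in the universal property. *)
Lemma tensor_spanned w : pure_span w.
Proof.
apply: contrapT => /(subspace_separation pure_span_subspace) [chi [Hchi chi0 chiw]].
have Hzero : lin (fun _ : T => 0 : K^o) by move=> k u v; rewrite scaler0 addr0.
have := tensor_ext Hchi Hzero (fun u v => chi0 _ (pure_span_tens u v)) w.
by rewrite chiw => /eqP; rewrite oner_eq0.
Qed.

Definition contract (psi : V -> K^o) : T -> U :=
  tlift tens (fun (u : U) v => psi v *: u).

Lemma contract_bilin (psi : V -> K^o) : lin psi -> bilin (fun (u : U) v => psi v *: u).
Proof.
move=> Hpsi; split=> [u|v] k x y /=; last by rewrite scalerDr !scalerA mulrC.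
by rewrite Hpsi scalerDl scalerA.
Qed.

Lemma contract_lin psi : lin psi -> lin (contract psi).
Proof. by move/contract_bilin/tlift_lin. Qed.

Lemma contractE psi : lin psi -> forall u v, contract psi (tens u v) = psi v *: u.
Proof. by move/contract_bilin/tliftE. Qed.

(* Induction on the length of a sum of pure tensors: a term [u0 (x) v0] with
   [v0 != 0] is absorbed into the others using a functional [psi0 v0 = 1]. *)
Lemma contract_sep w :
  (forall psi : V -> K^o, lin psi -> contract psi w = 0) -> w = 0.
Proof.
have [s ->] := tensor_spanned w; have [n] := ubnP (size s).
elim: n s => // n IHn [|[u0 v0] s] size_s Hs; first by rewrite big_nil.
case: (eqVneq v0 0) Hs => [->|/functional_one [psi0 [Hpsi0 psi0v0]]] Hs.
  have E0 : \sum_(p <- (u0, 0) :: s) tens p.1 p.2 = \sum_(p <- s) tens p.1 p.2.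
    by rewrite big_cons /= (lin0 (tens_linr u0)) add0r.
  by rewrite E0; apply: IHn => // psi Hpsi; rewrite -E0 Hs.
have u0E : u0 = - \sum_(p <- s) psi0 p.2 *: p.1.
  apply/eqP; rewrite -addr_eq0; move: (Hs psi0 Hpsi0).
  rewrite big_cons (linD (contract_lin Hpsi0)) (lin_sum _ _ (contract_lin Hpsi0)).
  rewrite !(contractE Hpsi0) psi0v0 scale1r.
  by under eq_bigr do rewrite (contractE Hpsi0); move=> ->.
set s' := map (fun p => (p.1, p.2 - psi0 p.2 *: v0)) s.
have Es : \sum_(p <- (u0, v0) :: s) tens p.1 p.2 = \sum_(p <- s') tens p.1 p.2.
  rewrite big_cons big_map /= u0E (linN (tens_linl _)) (lin_sum _ _ (tens_linl _)).
  rewrite -sumrN -big_split /=; apply: eq_bigr => p _.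
  by rewrite (linB (tens_linr _)) (linZ (tens_linr _)) (linZ (tens_linl _)) addrC.
rewrite Es; apply: IHn; first by rewrite size_map.
by move=> psi Hpsi; rewrite -Es Hs.
Qed.

End TensorProduct.

#[export] Hint Resolve tens_linl tens_linr contract_lin : lin.

Ltac pure_tensors HT := first [ apply: (tensor_ext2 HT) | apply: (tensor_ext HT) ];
  try (intros; solve [linearity]).

Section TensorSquare.
Variables (K : fieldType) (A T : lmodType K) (mul : A -> A -> A) (tens : A -> A -> T).
Hypotheses (HA : is_nd_algebra mul) (HT : is_tensor tens).

Lemma mul_linr a : lin (mul a). Proof. by case: HA => [[]]. Qed.
Lemma mul_linl b : lin (mul^~ b). Proof. by case: HA => [[]]. Qed.
Lemma mul_assoc a b c : mul (mul a b) c = mul a (mul b c). Proof. by case: HA => _ []. Qed.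
Lemma mul_nondeg_l a : (forall b, mul a b = 0) -> a = 0.
Proof. by case: HA => _ [_ [+ _]]; apply. Qed.
Lemma mul_nondeg_r a : (forall b, mul b a = 0) -> a = 0.
Proof. by case: HA => _ [_ [_ +]]; apply. Qed.

#[local] Hint Resolve mul_linr mul_linl : lin.

Lemma tmap_bilin (f g : A -> A) : lin f -> lin g -> bilin (fun u v => tens (f u) (g v)).
Proof. by move=> Hf Hg; split=> [u|v]; linearity. Qed.

Lemma tmap_lin (f g : A -> A) : lin f -> lin g -> lin (tmap tens tens f g).
Proof. by move=> Hf Hg; apply: (tlift_lin HT (tmap_bilin Hf Hg)). Qed.

Lemma tmapE (f g : A -> A) : lin f -> lin g ->
  forall u v, tmap tens tens f g (tens u v) = tens (f u) (g v).
Proof. by move=> Hf Hg; apply: (tliftE HT (tmap_bilin Hf Hg)). Qed.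

#[local] Hint Resolve tmap_lin : lin.

Lemma tflip_bilin : bilin (fun u v : A => tens v u).
Proof. by split=> *; linearity. Qed.

Lemma tflip_lin : lin (tflip tens). Proof. exact: (tlift_lin HT tflip_bilin). Qed.
Lemma tflipE u v : tflip tens (tens u v) = tens v u. Proof. exact: (tliftE HT tflip_bilin). Qed.

#[local] Hint Resolve tflip_lin : lin.

Lemma tflipK w : tflip tens (tflip tens w) = w.
Proof. by move: w; pure_tensors HT => u v; rewrite !tflipE. Qed.

Local Notation tm := (tmul mul tens).

Lemma tmul_inner_bilin w :
  bilin (fun c d => tmap tens tens (mul^~ c) (mul^~ d) w).
Proof.
split=> [c|d] k x y; move: w; apply: (tensor_ext HT); try by linearity.
- by move=> u v; rewrite !(tmapE (mul_linl _) (mul_linl _)) (mul_linr v) (tens_linr HT).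
- by move=> u v; rewrite !(tmapE (mul_linl _) (mul_linl _)) (mul_linr u) (tens_linl HT).
Qed.

Lemma tmul_linr w : lin (tm w). Proof. exact: (tlift_lin HT (tmul_inner_bilin w)). Qed.

#[local] Hint Resolve tmul_linr : lin.

Lemma tmulE a b c d : tm (tens a b) (tens c d) = tens (mul a c) (mul b d).
Proof.
by rewrite /tmul (tliftE HT (tmul_inner_bilin _)) (tmapE (mul_linl _) (mul_linl _)).
Qed.

Lemma tmul_linl z : lin (tm^~ z).
Proof.
move=> k w w'; move: z; pure_tensors HT => c d.
rewrite /tmul !(tliftE HT (tmul_inner_bilin _)).
exact: (tmap_lin (mul_linl _) (mul_linl _)).
Qed.

#[local] Hint Resolve tmul_linl : lin.

Definition lmul_x1 x := (m_x1 mul tens x).1.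
Definition rmul_x1 x := (m_x1 mul tens x).2.
Definition lmul_1x x := (m_1x mul tens x).1.
Definition rmul_1x x := (m_1x mul tens x).2.

Lemma lmul_x1_lin x : lin (lmul_x1 x). Proof. by apply: tmap_lin; linearity. Qed.
Lemma rmul_x1_lin x : lin (rmul_x1 x). Proof. by apply: tmap_lin; linearity. Qed.
Lemma lmul_1x_lin x : lin (lmul_1x x). Proof. by apply: tmap_lin; linearity. Qed.
Lemma rmul_1x_lin x : lin (rmul_1x x). Proof. by apply: tmap_lin; linearity. Qed.

#[local] Hint Resolve lmul_x1_lin rmul_x1_lin lmul_1x_lin rmul_1x_lin : lin.

Lemma lmul_x1E x u v : lmul_x1 x (tens u v) = tens (mul x u) v.
Proof. by apply: tmapE; linearity. Qed.
Lemma rmul_x1E x u v : rmul_x1 x (tens u v) = tens (mul u x) v.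
Proof. by apply: tmapE; linearity. Qed.
Lemma lmul_1xE x u v : lmul_1x x (tens u v) = tens u (mul x v).
Proof. by apply: tmapE; linearity. Qed.
Lemma rmul_1xE x u v : rmul_1x x (tens u v) = tens u (mul v x).
Proof. by apply: tmapE; linearity. Qed.

Lemma lmul_x1_linx w : lin (lmul_x1^~ w).
Proof.
by move=> k x y; move: w; pure_tensors HT => u v; rewrite !lmul_x1E (mul_linl u) (tens_linl HT).
Qed.
Lemma rmul_x1_linx w : lin (rmul_x1^~ w).
Proof.
by move=> k x y; move: w; pure_tensors HT => u v; rewrite !rmul_x1E (mul_linr u) (tens_linl HT).
Qed.
Lemma lmul_1x_linx w : lin (lmul_1x^~ w).
Proof.
by move=> k x y; move: w; pure_tensors HT => u v; rewrite !lmul_1xE (mul_linl v) (tens_linr HT).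
Qed.
Lemma rmul_1x_linx w : lin (rmul_1x^~ w).
Proof.
by move=> k x y; move: w; pure_tensors HT => u v; rewrite !rmul_1xE (mul_linr v) (tens_linr HT).
Qed.

Lemma tflip_lmul_x1 x w : tflip tens (lmul_x1 x w) = lmul_1x x (tflip tens w).
Proof. by move: w; pure_tensors HT => u v; rewrite lmul_x1E !tflipE lmul_1xE. Qed.
Lemma tflip_rmul_x1 x w : tflip tens (rmul_x1 x w) = rmul_1x x (tflip tens w).
Proof. by move: w; pure_tensors HT => u v; rewrite rmul_x1E !tflipE rmul_1xE. Qed.
Lemma tflip_lmul_1x x w : tflip tens (lmul_1x x w) = lmul_x1 x (tflip tens w).
Proof. by move: w; pure_tensors HT => u v; rewrite lmul_1xE !tflipE lmul_x1E. Qed.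
Lemma tflip_rmul_1x x w : tflip tens (rmul_1x x w) = rmul_x1 x (tflip tens w).
Proof. by move: w; pure_tensors HT => u v; rewrite rmul_1xE !tflipE rmul_x1E. Qed.

Lemma tmul_lmul_1x y w z : tm w (lmul_1x y z) = tm (rmul_1x y w) z.
Proof.
by move: w z; pure_tensors HT => a b c d; rewrite lmul_1xE rmul_1xE !tmulE mul_assoc.
Qed.
Lemma tmul_lmul_x1 x w z : tm w (lmul_x1 x z) = tm (rmul_x1 x w) z.
Proof.
by move: w z; pure_tensors HT => a b c d; rewrite lmul_x1E rmul_x1E !tmulE mul_assoc.
Qed.
Lemma lmul_x1_tmul x w z : lmul_x1 x (tm w z) = tm (lmul_x1 x w) z.
Proof.
by move: w z; pure_tensors HT => a b c d; rewrite !tmulE !lmul_x1E tmulE mul_assoc.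
Qed.
Lemma rmul_1x_tmul y w z : rmul_1x y (tm w z) = tm w (rmul_1x y z).
Proof.
by move: w z; pure_tensors HT => a b c d; rewrite !tmulE !rmul_1xE tmulE mul_assoc.
Qed.

Lemma lmul_1x_x1C y x w : lmul_1x y (lmul_x1 x w) = lmul_x1 x (lmul_1x y w).
Proof. by move: w; pure_tensors HT => u v; rewrite lmul_x1E !lmul_1xE lmul_x1E. Qed.
Lemma rmul_x1_1xC x y w : rmul_x1 x (rmul_1x y w) = rmul_1x y (rmul_x1 x w).
Proof. by move: w; pure_tensors HT => u v; rewrite rmul_1xE !rmul_x1E rmul_1xE. Qed.
Lemma lmul_x1M x y w : lmul_x1 (mul x y) w = lmul_x1 x (lmul_x1 y w).
Proof. by move: w; pure_tensors HT => u v; rewrite !lmul_x1E mul_assoc. Qed.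
Lemma rmul_1xM x y w : rmul_1x (mul x y) w = rmul_1x y (rmul_1x x w).
Proof. by move: w; pure_tensors HT => u v; rewrite !rmul_1xE mul_assoc. Qed.

Lemma contract_flip_sep w :
  (forall psi : A -> K^o, lin psi -> contract tens psi (tflip tens w) = 0) -> w = 0.
Proof.
move=> /(contract_sep HT) fw0.
by rewrite -[w]tflipK fw0 (lin0 tflip_lin).
Qed.

Lemma tmul_nondeg_l w : (forall c d, tm w (tens c d) = 0) -> w = 0.
Proof.
move=> Hw.
have Hw1 d : rmul_1x d w = 0.
  apply: (contract_sep HT) => psi Hpsi; apply: mul_nondeg_l => c.
  have -> : mul (contract tens psi (rmul_1x d w)) c = contract tens psi (tm w (tens c d)).
    move: w {Hw}; pure_tensors HT => u v.
    by rewrite rmul_1xE tmulE !(contractE HT Hpsi) (linZ (mul_linl c)).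
  by rewrite Hw (lin0 (contract_lin HT Hpsi)).
apply: contract_flip_sep => psi Hpsi; apply: mul_nondeg_l => d.
have -> : mul (contract tens psi (tflip tens w)) d
          = contract tens psi (tflip tens (rmul_1x d w)).
  move: w {Hw Hw1}; pure_tensors HT => u v.
  by rewrite rmul_1xE !tflipE !(contractE HT Hpsi) (linZ (mul_linl d)).
by rewrite Hw1 (lin0 tflip_lin) (lin0 (contract_lin HT Hpsi)).
Qed.

Lemma tmul_nondeg_r w : (forall c d, tm (tens c d) w = 0) -> w = 0.
Proof.
move=> Hw.
have Hw1 d : lmul_1x d w = 0.
  apply: (contract_sep HT) => psi Hpsi; apply: mul_nondeg_r => c.
  have -> : mul c (contract tens psi (lmul_1x d w)) = contract tens psi (tm (tens c d) w).
    move: w {Hw}; pure_tensors HT => u v.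
    by rewrite lmul_1xE tmulE !(contractE HT Hpsi) (linZ (mul_linr c)).
  by rewrite Hw (lin0 (contract_lin HT Hpsi)).
apply: contract_flip_sep => psi Hpsi; apply: mul_nondeg_r => d.
have -> : mul d (contract tens psi (tflip tens w))
          = contract tens psi (tflip tens (lmul_1x d w)).
  move: w {Hw Hw1}; pure_tensors HT => u v.
  by rewrite lmul_1xE !tflipE !(contractE HT Hpsi) (linZ (mul_linr d)).
by rewrite Hw1 (lin0 tflip_lin) (lin0 (contract_lin HT Hpsi)).
Qed.

Lemma tmul_cancel_l w1 w2 : (forall z, tm w1 z = tm w2 z) -> w1 = w2.
Proof.
move=> E; apply/eqP; rewrite -subr_eq0; apply/eqP; apply: tmul_nondeg_l => c d.
by have /= -> := linB (tmul_linl (tens c d)) w1 w2; rewrite E subrr.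
Qed.

Lemma tmul_cancel_r w1 w2 : (forall z, tm z w1 = tm z w2) -> w1 = w2.
Proof.
move=> E; apply/eqP; rewrite -subr_eq0; apply/eqP; apply: tmul_nondeg_r => c d.
by rewrite (linB (tmul_linr _)) E subrr.
Qed.

End TensorSquare.

#[export] Hint Resolve mul_linr mul_linl tmap_lin tflip_lin tmul_linr tmul_linl : lin.
#[export] Hint Resolve lmul_x1_lin rmul_x1_lin lmul_1x_lin rmul_1x_lin : lin.
#[export] Hint Resolve lmul_x1_linx rmul_x1_linx lmul_1x_linx rmul_1x_linx : lin.

(* Additive maps out of [{poly int}] send [X^i] to arbitrary elements, so any
   linear identity between sums of atoms holds once it holds in [{poly int}],
   where [ring] proves it. *)
Lemma zmod_poly_eval (V : zmodType) (a : seq V) :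
  exists e : {poly int} -> V, [/\ forall p q, e (p - q) = e p - e q,
    forall p q, e (p + q) = e p + e q & forall i, (i < size a)%N -> e 'X^i = a`_i].
Proof.
exists (fun p => \sum_(i < size a) a`_i *~ p`_i); split.
- by move=> p q; rewrite -sumrB; apply: eq_bigr => i _; rewrite coefB mulrzBr.
- by move=> p q; rewrite -big_split; apply: eq_bigr => i _; rewrite coefD mulrzDr.
- move=> i ia; rewrite (bigD1 (Ordinal ia)) //= coefXn eqxx mulr1z big1 ?addr0 // => j /eqP ji.
  by rewrite coefXn; case: eqP => [E|_]; [case: ji; apply: val_inj | rewrite mulr0z].
Qed.

Lemma commutator_expansion (V : zmodType) (lxdy rxdy mxdy nxdy lxfy rxfy mxfy nxfy
   lydx rydx mydx nydx lyfx ryfx myfx nyfx : V) :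
  (nydx + lxdy - (nxdy + lydx)) - ((ryfx + mxfy) - (rxfy + myfx))
  = ((lxdy - rxdy + mxdy - nxdy) - (lxfy - rxfy + mxfy - nxfy))
    - ((lydx - rydx + mydx - nydx) - (lyfx - ryfx + myfx - nyfx))
    + (lxfy - nxfy + mydx - rydx) - (lyfx - nyfx + mxdy - rxdy).
Proof.
have [e [eB eD eX]] := zmod_poly_eval [:: lxdy; rxdy; mxdy; nxdy; lxfy; rxfy; mxfy; nxfy;
  lydx; rydx; mydx; nydx; lyfx; ryfx; myfx; nyfx].
rewrite -[lxdy](eX 0%N) // -[rxdy](eX 1%N) // -[mxdy](eX 2%N) // -[nxdy](eX 3%N) //.
rewrite -[lxfy](eX 4%N) // -[rxfy](eX 5%N) // -[mxfy](eX 6%N) // -[nxfy](eX 7%N) //.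
rewrite -[lydx](eX 8%N) // -[rydx](eX 9%N) // -[mydx](eX 10%N) // -[nydx](eX 11%N) //.
rewrite -[lyfx](eX 12%N) // -[ryfx](eX 13%N) // -[myfx](eX 14%N) // -[nyfx](eX 15%N) //.
by rewrite -!eB -!eD -!eB -!eD -!eB; congr (e _); ring.
Qed.

Section Derivation.
Variables (K : fieldType) (A T : lmodType K) (mul : A -> A -> A) (tens : A -> A -> T).
Hypotheses (HA : is_nd_algebra mul) (HT : is_tensor tens).

Local Notation f := (tflip tens).
Local Notation L := (lmul_x1 mul tens).
Local Notation R := (rmul_x1 mul tens).
Local Notation M := (lmul_1x mul tens).
Local Notation N := (rmul_1x mul tens).

Lemma comm_lin x : lin (comm mul x). Proof. by rewrite /comm; linearity. Qed.

#[local] Hint Resolve comm_lin : lin.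

Lemma dot_bilin x : bilin (fun u v => tens (comm mul x u) v + tens u (comm mul x v)).
Proof. by split=> *; linearity. Qed.

Lemma dot_lin x : lin (dot mul tens x). Proof. exact: (tlift_lin HT (dot_bilin x)). Qed.

#[local] Hint Resolve dot_lin : lin.

Lemma dotE x w : dot mul tens x w = L x w - R x w + M x w - N x w.
Proof.
move: w; pure_tensors HT => u v; rewrite /dot (tliftE HT (dot_bilin x)).
rewrite (lmul_x1E HA HT) (rmul_x1E HA HT) (lmul_1xE HA HT) (rmul_1xE HA HT).
by rewrite (linB (tens_linl HT v)) (linB (tens_linr HT u)) addrA.
Qed.

Definition bibalanceator (D : A -> T) x y :=
  L x (f (D y)) - N x (f (D y)) + M y (D x) - R y (D x).

Lemma bibalanceator_bilin D : lin D -> bilin (bibalanceator D).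
Proof. by move=> HD; rewrite /bibalanceator; split=> *; linearity. Qed.

Lemma derivation_commutator (D : A -> T) : lin D ->
  (forall x y, D (mul x y) = N y (D x) + L x (D y)) ->
  forall x y, D (comm mul x y) - f (D (comm mul x y))
    = dot mul tens x (D y - f (D y)) - dot mul tens y (D x - f (D x))
      + bibalanceator D x y - bibalanceator D y x.
Proof.
move=> HD D_mul x y; rewrite /bibalanceator /comm (linB HD) !D_mul.
rewrite (linB (tflip_lin HT)) !(linD (tflip_lin HT)).
rewrite !(tflip_rmul_1x HA HT) !(tflip_lmul_x1 HA HT).
by rewrite !(linB (dot_lin _)) !dotE; apply: commutator_expansion.
Qed.

End Derivation.

Lemma elt_memb (K : fieldType) (A T : lmodType K) (mul : A -> A -> A)
    (tens : A -> A -> T) (m : mult T) :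
  (exists w, meq m (memb mul tens w)) -> meq m (memb mul tens (elt mul tens m)).
Proof. by move=> ex; rewrite /elt; eapply epsilon_spec. Qed.

Section InfinitesimalBialgebra.
Variables (K : fieldType) (A T T' : lmodType K) (mul : A -> A -> A).
Variables (tens : A -> A -> T) (tens3 : A -> A -> A -> T') (Delta : A -> mult T).
Hypotheses (HT : is_tensor tens) (HD : is_inf_mult_bialgebra mul tens Delta tens3).

Let HA : is_nd_algebra mul := HD.1.

Local Notation tm := (tmul mul tens).
Local Notation Dr := (D_r mul tens Delta).
Local Notation Dl := (D_l mul tens Delta).
Local Notation L := (lmul_x1 mul tens).
Local Notation R := (rmul_x1 mul tens).
Local Notation M := (lmul_1x mul tens).
Local Notation N := (rmul_1x mul tens).

Lemma Delta_lin_l k x y w : (Delta (k *: x + y)).1 w = k *: (Delta x).1 w + (Delta y).1 w.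
Proof. by case: HD => _ [[_ [/(_ k x y) [+ _] _]] _]; apply. Qed.

Lemma Delta_lin_r k x y w : (Delta (k *: x + y)).2 w = k *: (Delta x).2 w + (Delta y).2 w.
Proof. by case: HD => _ [[_ [/(_ k x y) [_ +] _]] _]; apply. Qed.

Lemma Delta_mul_l x y w : (Delta (mul x y)).1 w = (Delta x).1 (M y w) + L x ((Delta y).1 w).
Proof. by case: HD => _ [_ /(_ x y) [+ _]]; apply. Qed.

Lemma Delta_mul_r x y w : (Delta (mul x y)).2 w = N y ((Delta x).2 w) + (Delta y).2 (R x w).
Proof. by case: HD => _ [_ /(_ x y) [_ +]]; apply. Qed.

Lemma D_rE x a z : (Delta x).1 (L a z) = tm (Dr x a) z.
Proof. by case: HD => _ [[_ [_ [+ _]]] _] => /(_ a x) /elt_memb [+ _]; apply. Qed.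

Lemma D_lE x a z : (Delta x).2 (N a z) = tm z (Dl x a).
Proof. by case: HD => _ [[_ [_ [_ [+ _]]]] _] => /(_ x a) /elt_memb [_ +]; apply. Qed.

Lemma D_r_lin a : lin (Dr^~ a).
Proof.
move=> k x y; apply: (tmul_cancel_l HA HT) => z.
have /= -> := tmul_linl HA HT z k (Dr x a) (Dr y a).
by rewrite -!D_rE Delta_lin_l.
Qed.

Lemma D_l_lin a : lin (Dl^~ a).
Proof.
move=> k x y; apply: (tmul_cancel_r HA HT) => z.
by rewrite (tmul_linr HA HT z) -!D_lE Delta_lin_r.
Qed.

Lemma D_r_mul x y a : Dr (mul x y) a = N y (Dr x a) + L x (Dr y a).
Proof.
apply: (tmul_cancel_l HA HT) => z.
have /= -> := linD (tmul_linl HA HT z) (N y (Dr x a)) (L x (Dr y a)).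
rewrite -D_rE Delta_mul_l (lmul_1x_x1C HA HT).
by rewrite !D_rE (tmul_lmul_1x HA HT) (lmul_x1_tmul HA HT).
Qed.

Lemma D_l_mul x y a : Dl (mul x y) a = N y (Dl x a) + L x (Dl y a).
Proof.
apply: (tmul_cancel_r HA HT) => z.
rewrite (linD (tmul_linr HA HT z)) -D_lE Delta_mul_r.
by rewrite (rmul_x1_1xC HA HT) !D_lE (rmul_1x_tmul HA HT) -(tmul_lmul_x1 HA HT).
Qed.

Lemma D_r_mulr y a x : Dr y (mul a x) = R x (Dr y a).
Proof.
apply: (tmul_cancel_l HA HT) => z.
by rewrite -D_rE (lmul_x1M HA HT) D_rE (tmul_lmul_x1 HA HT).
Qed.

Lemma D_l_mull y x a : Dl y (mul x a) = M x (Dl y a).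
Proof.
apply: (tmul_cancel_r HA HT) => z.
by rewrite -D_lE (rmul_1xM HA HT) D_lE (tmul_lmul_1x HA HT).
Qed.

Lemma bib_underE a :
  bib_under mul tens Delta a = tlift tens (bibalanceator mul tens (Dr^~ a)).
Proof.
congr (tlift tens _); apply/funext => x; apply/funext => y.
by rewrite /bibalanceator !D_r_mulr (tflip_rmul_x1 HA HT).
Qed.

Lemma bib_overE a :
  bib_over mul tens Delta a = tlift tens (bibalanceator mul tens (Dl^~ a)).
Proof.
congr (tlift tens _); apply/funext => x; apply/funext => y.
by rewrite /bibalanceator !D_l_mull (tflip_lmul_1x HA HT) (tflip_rmul_x1 HA HT).
Qed.

End InfinitesimalBialgebra.

Unset Implicit Arguments.

Theorem proposition3p2
  (A : lmodType CC) (mul : A -> A -> A)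
  (T : lmodType CC) (tens : A -> A -> T) (HT : is_tensor tens)
  (T' : lmodType CC) (tens3 : A -> A -> A -> T') (HT' : is_tensor3 tens3)
  (Delta : A -> mult T)
  (H : is_inf_mult_bialgebra mul tens Delta tens3) :
  forall a x y : A,
    delta_ mul tens Delta a (comm mul x y)
      = dot mul tens x (delta_ mul tens Delta a y)
        - dot mul tens y (delta_ mul tens Delta a x)
        + bib_under mul tens Delta a (tens x y)
        - bib_under mul tens Delta a (tens y x)
    /\
    zeta_ mul tens Delta a (comm mul x y)
      = dot mul tens x (zeta_ mul tens Delta a y)
        - dot mul tens y (zeta_ mul tens Delta a x)
        + bib_over mul tens Delta a (tens x y)
        - bib_over mul tens Delta a (tens y x).
Proof.
move=> a x y; have HA := H.1; split.
- have HDr := D_r_lin HT H a.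
  rewrite (bib_underE HT H) !(tliftE HT (bibalanceator_bilin HA HT HDr)).
  exact: (derivation_commutator HA HT HDr (fun x y => D_r_mul HT H x y a)).
- have HDl := D_l_lin HT H a.
  rewrite (bib_overE HT H) !(tliftE HT (bibalanceator_bilin HA HT HDl)).
  exact: (derivation_commutator HA HT HDl (fun x y => D_l_mul HT H x y a)).
Qed.
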